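(* Let $(X,Z)\in\mathbb{R}^{n}\times\mathbb{R}^{n\times p}$ be any fixed design matrix and consider the linear model $Y=X\beta+Z\theta+\epsilon$, where the noise vector $\epsilon\in\mathbb{R}^n$ is exchangeable. Let $T(\cdot,\cdot;X,Z,\epsilon)$ be a function of a pair of $n\times n$ permutation matrices that satisfies the transferability condition: for all $P_{\pi_i},P_{\pi_j},P_\sigma\in\mathcal{S}_n$, $$T(P_{\pi_i},P_{\pi_j};X,Z,P_\sigma\epsilon)=T(P_\sigma^{-1}P_{\pi_i},P_\sigma^{-1}P_{\pi_j};X,Z,\epsilon).$$ Let $\mathcal{R}=\mathcal{R}(X,Z)\subseteq[n]$ be any row set (possibly depending on the design). Draw $P_{\pi_1\mid\mathcal{R}},\dots,P_{\pi_B\mid\mathcal{R}}$ uniformly at random from $\mathcal{S}_{n\mid\mathcal{R}}$, set $T_{i,0}=T(P_{\pi_i\mid\mathcal{R}},I_n;X,Z,\epsilon)$ and $T_{0,i}=T(I_n,P_{\pi_i\mid\mathcal{R}};X,Z,\epsilon)$, and define $$p_{\text{val}}=\frac{1}{B+1}\Big[1+\sum_{i=1}^B\mathbb{I}(T_{i,0}>T_{0,i})+\tfrac12\mathbb{I}(T_{i,0}=T_{0,i})\Big].$$ Then under the null hypothesis $\mathcal{H}_0:\beta=0$, $pr(p_{\text{val}}\le\alpha\mid\mathcal{H}_0)<2\alpha$ for all $\alpha>0$.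
   Context: $[n]=\{1,\dots,n\}$. $\mathcal{S}_n$ denotes the group of all $n\times n$ permutation matrices; a permutation $\pi$ of $[n]$ corresponds to $P_\pi=(p_{ij})$ with $p_{ij}=1$ iff $\pi(i)=j$. For $\mathcal{R}\subseteq[n]$, $\mathcal{S}_{n\mid\mathcal{R}}$ is the subgroup of permutation matrices $P_{\pi\mid\mathcal{R}}$ with $p_{ii}=1$ for all $i\in\mathcal{R}$ (i.e. permutations fixing every row in $\mathcal{R}$). A noise vector $\epsilon$ is exchangeable if $P\epsilon$ has the same distribution as $\epsilon$ for every $P\in\mathcal{S}_n$. $\mathbb{I}$ is the indicator function. *)

From HB Require Import structures.
From mathcomp Require Import all_boot all_order all_algebra all_fingroup.
From mathcomp Require Import all_classical all_reals all_analysis.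
Set Implicit Arguments. Unset Strict Implicit. Unset Printing Implicit Defensive.
Import Order.TTheory GRing.Theory Num.Theory.
Local Open Scope ring_scope.

(* Permutation pi of [n] <-> permutation matrix P_pi with (P_pi)_{ij} = 1 iff pi(i)=j;
   this is mathcomp's [perm_mx pi].  With mathcomp's convention (s * t)%g = t \o s
   we have perm_mx (s * t) = perm_mx s *m perm_mx t, so P_s^{-1} P_t corresponds to
   the permutation (s^-1 * t)%g. *)

(* The action of P_s on a vector e of R^n (stored as an n-tuple):
   (P_s e)_i = sum_j (P_s)_{ij} e_j = e_{s(i)}. *)
Definition permv (R : Type) (n : nat) (s : 'S_n) (e : n.-tuple R) : n.-tuple R :=
  [tuple tnth e (s i) | i < n].

Definition tcol (R : Type) (n : nat) (e : n.-tuple R) : 'cV[R]_n :=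
  \col_i tnth e i.

Definition fix_rows (n : nat) (Rs : {set 'I_n}) : {set 'S_n} :=
  [set s : 'S_n | [forall i in Rs, s i == i]].

Definition pval (R : realType) (B : nat) (Ti0 T0i : 'I_B -> R) : R :=
  (1 + \sum_(i < B) ((nat_of_bool (T0i i < Ti0 i)%R)%:R + 2^-1 * (nat_of_bool (Ti0 i == T0i i))%:R))
  / (B.+1)%:R.

(* Probability that p_val <= alpha, where pis = (pi_1,...,pi_B) are drawn i.i.d.
   uniformly from G = S_{n|R}, independently of the noise eps (distributed
   according to P):  pr = |G|^{-B} * sum_{pis in G^B} P(pval(pis, eps) <= alpha). *)
Definition pr_reject (R : realType) (d : measure_display) (Omega : measurableType d)
  (P : probability Omega R) (n B : nat) (G : {set 'S_n})
  (T : 'S_n -> 'S_n -> n.-tuple R -> R) (eps : Omega -> n.-tuple R) (alpha : R)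
  : \bar R :=
  ((\sum_(pis : {ffun 'I_B -> 'S_n} | [forall i, pis i \in G])
      P [set w | pval (fun i => T (pis i) 1%g (eps w))
                      (fun i => T 1%g (pis i) (eps w)) <= alpha]%R%classic)
   * ((#|G| ^ B)%:R^-1)%:E)%E.

From Pilot Require Import Defs.
From HB Require Import structures.
From mathcomp Require Import all_boot all_order all_algebra all_fingroup.
From mathcomp Require Import all_classical all_reals all_analysis.
From mathcomp Require Import measurable_realfun ring lra.
Import Order.TTheory GRing.Theory Num.Theory.
Local Open Scope classical_set_scope.
Local Open Scope ring_scope.
Set Implicit Arguments. Unset Strict Implicit. Unset Printing Implicit Defensive.

(* Adjoin the identity to the B drawn permutations as draw number 0.  Exchangeability
   of the noise and transferability make the law of all statistics invariant under
   left multiplication of every draw by an element of G = S_{n|R}, so the identity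
   may be replaced by a uniform element of G: the p-value is then computed from B+1
   i.i.d. uniform draws with draw 0 as reference, and by symmetry pr(p_val <= alpha)
   is the expected fraction of draws j whose p-value, computed with draw j as
   reference, is at most alpha.  The score a_ij in {0, 1/2, 1} of draw i against
   draw j satisfies a_ij + a_ji = 1, so summing it over the m draws with a small
   p-value gives m^2/2 <= m (alpha (B+1) - 1/2), i.e. m <= max(0, 2 alpha (B+1) - 1).
   Hence pr(p_val <= alpha) <= max(0, 2 alpha - 1/(B+1)) < 2 alpha. *)

Definition ffcons (T : Type) (k : nat) (x : T) (f : {ffun 'I_k -> T}) :
  {ffun 'I_k.+1 -> T} :=
  [ffun j => if unlift ord0 j is Some i then f i else x].

Lemma ffcons0 T k (x : T) (f : {ffun 'I_k -> T}) : ffcons x f ord0 = x.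
Proof. by rewrite ffunE unlift_none. Qed.

Lemma ffcons_lift T k (x : T) (f : {ffun 'I_k -> T}) i :
  ffcons x f (lift ord0 i) = f i.
Proof. by rewrite ffunE liftK. Qed.

Definition lmul_ffun (gT : finGroupType) (I : finType) (s : gT)
  (f : {ffun I -> gT}) : {ffun I -> gT} :=
  [ffun i => (s * f i)%g].

Lemma lmul_ffunK (gT : finGroupType) (I : finType) (s : gT) :
  cancel (@lmul_ffun gT I s) (lmul_ffun s^-1%g).
Proof. by move=> f; apply/ffunP => i; rewrite !ffunE mulKg. Qed.

Lemma lmul_ffunKV (gT : finGroupType) (I : finType) (s : gT) :
  cancel (@lmul_ffun gT I s^-1%g) (lmul_ffun s).
Proof. by move=> f; apply/ffunP => i; rewrite !ffunE mulKVg. Qed.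

Lemma lmul_ffcons (gT : finGroupType) k (s x : gT) (f : {ffun 'I_k -> gT}) :
  lmul_ffun s (ffcons x f) = ffcons (s * x)%g (lmul_ffun s f).
Proof. by apply/ffunP => j; rewrite !ffunE; case: unlift => // i; rewrite ffunE. Qed.

Section BigFfunOn.
Variable V : nmodType.

Lemma big_ffun_on_cons (T : finType) k (A : {pred T})
    (F : {ffun 'I_k.+1 -> T} -> V) :
  \sum_(f in ffun_on A) F f = \sum_(x in A) \sum_(g in ffun_on A) F (ffcons x g).
Proof.
pose uncons (f : {ffun 'I_k.+1 -> T}) := (f ord0, [ffun i => f (lift ord0 i)]).
have unconsK : cancel uncons (fun p => ffcons p.1 p.2).
  move=> f; apply/ffunP => j; rewrite ffunE.
  by case: unliftP => [i ->|->] /=; rewrite ?ffunE.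
have ffconsK : cancel (fun p => ffcons p.1 p.2) uncons.
  case=> x g; rewrite /uncons ffcons0; congr pair.
  by apply/ffunP => i; rewrite ffunE ffcons_lift.
rewrite pair_big_dep (reindex (fun p => ffcons p.1 p.2)) /=; last first.
  by apply: onW_bij; exists uncons.
apply: eq_bigl => -[x g] /=; apply/ffun_onP/andP => [Af | [Ax /ffun_onP Ag] j].
  split; first by have := Af ord0; rewrite ffcons0.
  by apply/ffun_onP => i; have := Af (lift ord0 i); rewrite ffcons_lift.
by rewrite ffunE; case: unlift.
Qed.

Lemma big_ffun_on_perm (I T : finType) (A : {pred T}) (s : {perm I})
    (F : {ffun I -> T} -> V) :
  \sum_(f in ffun_on A) F [ffun i => f (s i)] = \sum_(f in ffun_on A) F f.
Proof.
rewrite [RHS](reindex (fun f : {ffun I -> T} => [ffun i => f (s i)])) /=.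
  apply: eq_bigl => f; apply/ffun_onP/ffun_onP => Af i; rewrite ?ffunE //.
  by have := Af ((s^-1)%g i); rewrite ffunE permKV.
apply: onW_bij; exists (fun f : {ffun I -> T} => [ffun i => f ((s^-1)%g i)]) => f;
  by apply/ffunP => i; rewrite !ffunE ?permK ?permKV.
Qed.

Lemma big_ffun_on_lmul (gT : finGroupType) (I : finType) (G : {group gT}) s
    (F : {ffun I -> gT} -> V) :
  s \in G -> \sum_(f in ffun_on G) F (lmul_ffun s f) = \sum_(f in ffun_on G) F f.
Proof.
move=> Gs; rewrite [RHS](reindex (lmul_ffun s)) /=; last first.
  by apply: onW_bij; exists (lmul_ffun s^-1%g); [exact: lmul_ffunK|exact: lmul_ffunKV].
apply: eq_bigl => f; apply/ffun_onP/ffun_onP => Gf i.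
  by rewrite ffunE groupMl.
by have := Gf i; rewrite ffunE groupMl.
Qed.

Lemma big_ffun_on_lmul_invariant (gT : finGroupType) (G : {group gT}) k
    (F : {ffun 'I_k.+1 -> gT} -> V) :
  (forall s f, s \in G -> F (lmul_ffun s f) = F f) ->
  \sum_(f in ffun_on G) F f = (\sum_(g in ffun_on G) F (ffcons 1%g g)) *+ #|G|.
Proof.
move=> F_inv; rewrite big_ffun_on_cons -sumr_const; apply: eq_bigr => x Gx.
rewrite -(big_ffun_on_lmul (fun g => F (ffcons 1%g g)) (groupVr Gx)).
apply: eq_bigr => g _.
by rewrite -(F_inv x^-1%g (ffcons x g) (groupVr Gx)) lmul_ffcons mulVg.
Qed.

End BigFfunOn.

Lemma card_colsum_le (R : realFieldType) (I : finType) (a : I -> I -> R) (c : R) :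
  (forall i j, 0 <= a i j) -> (forall i j, a i j + a j i = 1) ->
  #|[set j | 2^-1 + \sum_i a i j <= c]%SET|%:R <= Num.max 0 (2 * c - 1).
Proof.
move=> a_ge0 a_sym; set J := [set j | _]%SET; set m : R := #|J|%:R.
have double_sum : 2 * \sum_(j in J) \sum_(i in J) a i j = m * m.
  rewrite mulr2n mulrDl mul1r [X in _ + X = _]exchange_big -big_split /=.
  rewrite (eq_bigr (fun _ => m)) => [|j _].
    by rewrite sumr_const -mulr_natr.
  rewrite -big_split (eq_bigr (fun _ => 1)) => [|i _]; last exact: a_sym.
  by rewrite sumr_const.
have col_bound : \sum_(j in J) \sum_(i in J) a i j <= m * (c - 2^-1).
  rewrite /m mulr_natl -sumr_const; apply: ler_sum => j; rewrite inE => Jj.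
  apply: le_trans (_ : \sum_i a i j <= _); last by rewrite lerBrDl.
  by rewrite [leRHS](bigID (mem J)) /= lerDl sumr_ge0.
have sq_bound : m * m <= m * (2 * c - 1).
  rewrite -double_sum (_ : m * (2 * c - 1) = 2 * (m * (c - 2^-1))); last first.
    by rewrite [RHS]mulrCA; congr (_ * _); rewrite mulrBr divff // pnatr_eq0.
  by rewrite ler_pM2l.
rewrite le_max; have [m_gt0|//] := ltrP 0 m.
by rewrite -(ler_pM2l m_gt0) sq_bound orbT.
Qed.

Lemma measurable_natr_bool d (T : measurableType d) (R : realType) (b : T -> bool) :
  measurable_fun setT b -> measurable_fun setT (fun x => (b x)%:R : R).
Proof.
by move=> mb; apply: (measurableT_comp (f := fun c : bool => c%:R : R) _ mb) => _ Y _.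
Qed.

Lemma sum_probability_le d (Omega : measurableType d) (R : realType)
    (P : probability Omega R) (I : finType) (A : I -> set Omega) (K : R) :
  (forall i, measurable (A i)) -> (forall w, \sum_i \1_(A i) w <= K) ->
  \sum_i fine (P (A i)) <= K.
Proof.
move=> mA AK; rewrite -lee_fin -sumEFin.
have PA i : P (A i) = (\int[P]_w (\1_(A i) w)%:E)%E.
  by rewrite integral_indic // setIT.
under eq_bigr => i _ do rewrite fineK ?fin_num_measure // PA.
rewrite -ge0_integral_sum //; last first.
  by move=> i; apply/measurable_EFinP; exact: measurable_indic.
apply: le_trans (_ : _ <= \int[P]_w (cst K%:E w))%E _.
  apply: ge0_le_integral => //.
  - by move=> w _; apply: sume_ge0 => i _; rewrite lee_fin.
  - by apply: emeasurable_sum => i; apply/measurable_EFinP; exact: measurable_indic.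
  - by move=> w _; rewrite sumEFin lee_fin.
by rewrite integral_cst // [X in (_ * X)%E]probability_setT mule1.
Qed.

Section PermutationPvalue.
Variables (R : realType) (n : nat) (T : 'S_n -> 'S_n -> n.-tuple R -> R).

Definition score (u v : 'S_n) (e : n.-tuple R) : R :=
  (T v u e < T u v e)%R%:R + 2^-1 * (T u v e == T v u e)%:R.

Lemma score_ge0 u v e : 0 <= score u v e.
Proof. by rewrite addr_ge0 ?mulr_ge0. Qed.

Lemma score_sym u v e : score u v e + score v u e = 1.
Proof. by rewrite /score eq_sym; case: ltgtP => /=; lra. Qed.

(* The p-value with draw [j] of [rho] as reference and the other draws as the
   random permutations: [2^-1] and the self-comparison [score (rho j) (rho j) = 2^-1]
   together supply the leading [1] of [pval]. *)
Definition pval_at (k : nat) (j : 'I_k) (rho : {ffun 'I_k -> 'S_n})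
  (e : n.-tuple R) : R :=
  (2^-1 + \sum_i score (rho i) (rho j) e) / k%:R.

Lemma pval_at_perm k (s : 'S_k) j rho e :
  pval_at (s j) rho e = pval_at j [ffun i => rho (s i)] e.
Proof.
rewrite /pval_at ffunE (reindex_inj (@perm_inj _ s)).
by under [in RHS]eq_bigr => i _ do rewrite ffunE.
Qed.

Lemma pval_ffcons B (r : {ffun 'I_B -> 'S_n}) e :
  Defs.pval (fun i => T (r i) 1%g e) (fun i => T 1%g (r i) e) =
  pval_at ord0 (ffcons 1%g r) e.
Proof.
have score_id : score 1%g 1%g e = 2^-1 by rewrite /score ltxx eqxx /= add0r mulr1.
rewrite /Defs.pval /pval_at big_ord_recl ffcons0 score_id addrA.
congr ((_ + _) / _); first lra.
by apply: eq_bigr => i _; rewrite ffcons_lift.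
Qed.

Lemma card_pval_at_le k (rho : {ffun 'I_k -> 'S_n}) e alpha :
  #|[set j | pval_at j rho e <= alpha]%SET|%:R <=
  Num.max 0 (2 * (alpha * k%:R) - 1).
Proof.
have -> : [set j | pval_at j rho e <= alpha]%SET =
          [set j | 2^-1 + \sum_i score (rho i) (rho j) e <= alpha * k%:R]%SET.
  apply/setP => j; rewrite !inE /pval_at ler_pdivrMr // ltr0n.
  exact: leq_ltn_trans (leq0n j) (ltn_ord j).
apply: (@card_colsum_le _ _ (fun i j => score (rho i) (rho j) e)) => i j.
  exact: score_ge0.
exact: score_sym.
Qed.

Hypothesis T_transfer : forall (pi1 pi2 s : 'S_n) (e : n.-tuple R),
  T pi1 pi2 (permv s e) = T (s^-1 * pi1)%g (s^-1 * pi2)%g e.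

Lemma pval_at_permv k (j : 'I_k) rho s e :
  pval_at j rho (permv s e) = pval_at j (lmul_ffun s^-1%g rho) e.
Proof.
by rewrite /pval_at; congr ((_ + _) / _); apply: eq_bigr => i _;
  rewrite /score !T_transfer !ffunE.
Qed.

Hypothesis T_measurable : forall pi1 pi2 : 'S_n, measurable_fun setT (T pi1 pi2).

Lemma measurable_pval_at_le k (j : 'I_k) rho alpha :
  measurable [set e | pval_at j rho e <= alpha].
Proof.
have m_pval : measurable_fun setT (pval_at j rho).
  apply: measurable_funM => //; apply: measurable_funD => //.
  apply: measurable_sum => i; apply: measurable_funD.
    exact/measurable_natr_bool/measurable_fun_ltr.
  by apply: measurable_funM => //; exact/measurable_natr_bool/measurable_fun_eqr.
have := measurable_fun_ler m_pval (measurable_cst alpha) measurableT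
  (_ : measurable [set true]).
by rewrite setTI; apply.
Qed.

Variables (d : measure_display) (Omega : measurableType d)
  (P : probability Omega R) (eps : Omega -> n.-tuple R) (alpha : R).
Hypothesis eps_measurable : measurable_fun setT eps.
Hypothesis eps_exchangeable : forall (s : 'S_n) (A : set (n.-tuple R)),
  measurable A -> P (eps @^-1` A) = P ((fun w => permv s (eps w)) @^-1` A).

Definition prob_pval_le k (j : 'I_k) rho : R :=
  fine (P [set w | pval_at j rho (eps w) <= alpha]).

Lemma measurable_pval_le k (j : 'I_k) rho :
  measurable [set w | pval_at j rho (eps w) <= alpha].
Proof.
have := eps_measurable measurableT (measurable_pval_at_le j rho alpha).
by rewrite setTI.
Qed.

Lemma prob_pval_le_lmul k (j : 'I_k) s rho :
  prob_pval_le j (lmul_ffun s rho) = prob_pval_le j rho.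
Proof.
rewrite /prob_pval_le (eps_exchangeable s (measurable_pval_at_le j _ alpha)).
by congr (fine (P _)); apply: eq_set => w /=; rewrite pval_at_permv lmul_ffunK.
Qed.

Lemma prob_pval_le_perm k (s : 'S_k) j rho :
  prob_pval_le (s j) rho = prob_pval_le j [ffun i => rho (s i)].
Proof.
by rewrite /prob_pval_le; congr (fine (P _)); apply: eq_set => w; rewrite pval_at_perm.
Qed.

Lemma sum_prob_pval_le_ord0 (A : {pred 'S_n}) k :
  (\sum_(rho in ffun_on A) prob_pval_le (@ord0 k) rho) *+ k.+1 =
  \sum_(rho in ffun_on A) \sum_(j < k.+1) prob_pval_le j rho.
Proof.
transitivity (\sum_(j < k.+1) \sum_(rho in ffun_on A) prob_pval_le (@ord0 k) rho).
  by rewrite sumr_const card_ord.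
rewrite [RHS]exchange_big; apply: eq_bigr => j _.
rewrite -(big_ffun_on_perm _ (tperm ord0 j)); apply: eq_bigr => rho _.
by rewrite -prob_pval_le_perm tpermL.
Qed.

Lemma sum_prob_pval_le k rho :
  \sum_(j < k) prob_pval_le j rho <= Num.max 0 (2 * (alpha * k%:R) - 1).
Proof.
apply: sum_probability_le => [j|w]; first exact: measurable_pval_le.
suff -> : \sum_j (\1_([set w | pval_at j rho (eps w) <= alpha]) w : R) =
          #|[set j | pval_at j rho (eps w) <= alpha]%SET|%:R.
  exact: card_pval_at_le.
rewrite -sum1dep_card natr_sum [RHS]big_mkcond /=; apply: eq_bigr => j _.
rewrite indicE (_ : w \in _ = (pval_at j rho (eps w) <= alpha)).
  by case: ifP.
by apply/idP/idP; rewrite inE.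
Qed.

Lemma pr_rejectE (G : {set 'S_n}) B :
  pr_reject P B G T eps alpha =
  ((\sum_(r in ffun_on G) prob_pval_le (@ord0 B) (ffcons 1%g r)) / #|G|%:R ^+ B)%:E.
Proof.
rewrite /pr_reject natrX EFinM -sumEFin; congr (_ * _)%E.
apply: eq_big => [r|r _]; first exact/forallP/ffun_onP.
rewrite /prob_pval_le fineK ?fin_num_measure //; last exact: measurable_pval_le.
by congr (P _); apply: eq_set => w; rewrite pval_ffcons.
Qed.

Theorem pr_reject_lt (G : {group 'S_n}) (B : nat) :
  0 < alpha -> (pr_reject P B G T eps alpha < (2 * alpha)%:E)%E.
Proof.
move=> alpha_gt0; rewrite pr_rejectE lte_fin.
set S := \sum_(r in ffun_on G) _.
set K := Num.max 0 (2 * (alpha * B.+1%:R) - 1).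
have averaging : \sum_(rho in ffun_on G) prob_pval_le (@ord0 B) rho = S *+ #|G|.
  by apply: big_ffun_on_lmul_invariant => s rho _; exact: prob_pval_le_lmul.
have key : S *+ #|G| *+ B.+1 <= K *+ #|G| ^ B.+1.
  rewrite -averaging sum_prob_pval_le_ord0.
  apply: le_trans (ler_sum _ (fun rho _ => sum_prob_pval_le rho)) _.
  by rewrite sumr_const card_ffun_on card_ord.
have K_lt : K < 2 * alpha * B.+1%:R.
  have : 0 < alpha * B.+1%:R by rewrite mulr_gt0.
  by rewrite gt_max -mulrA; lra.
move: key; rewrite -mulrnA -[S *+ _]mulr_natr -[K *+ _]mulr_natr natrM natrX.
set N : R := #|G|%:R => key.
have N_gt0 : 0 < N by rewrite ltr0n; apply/card_gt0P; exists 1%g.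
have NB_gt0 : 0 < N ^+ B by rewrite exprn_gt0.
rewrite ltr_pdivrMr // -(ltr_pM2r (_ : 0 < N * B.+1%:R)) ?mulr_gt0 //.
apply: le_lt_trans key _.
rewrite (_ : _ * (N * B.+1%:R) = 2 * alpha * B.+1%:R * N ^+ B.+1); last first.
  by rewrite exprS; ring.
by rewrite ltr_pM2r // exprn_gt0.
Qed.

End PermutationPvalue.

Lemma fix_rows_astab n (Rs : {set 'I_n}) : fix_rows Rs = 'C(Rs | 'P)%g.
Proof.
by apply/setP => s; rewrite inE; apply/forall_inP/astabP => fix_s i /fix_s /eqP.
Qed.

Theorem theorem1
  (R : realType) (d : measure_display) (Omega : measurableType d)
  (P : probability Omega R) (n p B : nat)
  (X : 'cV[R]_n) (Z : 'M[R]_(n, p)) (beta : R) (theta : 'cV[R]_p)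
  (eps : Omega -> n.-tuple R)
  (S : 'cV[R]_n -> 'M[R]_(n, p) -> 'S_n -> 'S_n -> 'cV[R]_n -> R)
  (Rs : {set 'I_n}) :
  (0 < B)%N ->
  (* null hypothesis H_0 : beta = 0 *)
  beta = 0 ->
  measurable_fun setT eps ->
  (* exchangeable noise: P_s eps has the same distribution as eps *)
  (forall (s : 'S_n) (A : set (n.-tuple R)), measurable A ->
     P (eps @^-1` A) = P ((fun w => permv s (eps w)) @^-1` A)) ->
  let T := fun (pi1 pi2 : 'S_n) (e : n.-tuple R) =>
             S X Z pi1 pi2 (beta *: X + Z *m theta + tcol e) in
  (* T is a (measurable) statistic of the noise *)
  (forall pi1 pi2 : 'S_n, measurable_fun setT (T pi1 pi2)) ->
  (* transferability *)
  (forall (pi1 pi2 s : 'S_n) (e : n.-tuple R),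
     T pi1 pi2 (permv s e) = T (s^-1 * pi1)%g (s^-1 * pi2)%g e) ->
  forall alpha : R, 0 < alpha ->
    (pr_reject P B (fix_rows Rs) T eps alpha < (2 * alpha)%:E)%E.
Proof.
move=> _ _ eps_meas eps_exch T T_meas T_transfer alpha alpha_gt0.
rewrite fix_rows_astab.
exact: (pr_reject_lt T_transfer T_meas eps_meas eps_exch 'C(Rs | 'P)%G).
Qed.
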